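(* Let $\rho=(a^b)$ be a partition of $n=ab$ with $a\ge 3$ and $b\ge 3$. Define \[ \alpha(\rho)=(a+1,a^{\,b-2},a-1),\quad \beta(\rho)=(a^{\,b-1},a-1,1), \] \[ \gamma_1(\rho)=(a+1,a^{\,b-3},(a-1)^2,1),\quad \gamma_2(\rho)=(a+1,a^{\,b-2},a-2,1) \] (parts reordered into nonincreasing order where necessary). Then $\alpha(\rho),\beta(\rho),\gamma_1(\rho),\gamma_2(\rho)$ form a $4$-clique in $G_n$. In particular, the edge $\alpha(\rho)\beta(\rho)$ is contained in a $3$-simplex of the clique complex $K_n=\mathrm{Cl}(G_n)$.
   Context: The partition graph $G_n$ has as vertices the integer partitions of $n$; two partitions are adjacent if one is obtained from the other by a single elementary unit transfer followed by reordering: decrease one part by $1$ and either increase a different part by $1$ or create a new part equal to $1$, then delete a part that became $0$ and sort in nonincreasing order (the result being different from the original). Exponent notation $a^k$ denotes $k$ parts equal to $a$. The clique complex $\mathrm{Cl}(G_n)$ is the simplicial complex whose simplices are the cliques of $G_n$. *)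

From mathcomp Require Import all_boot.
Set Implicit Arguments. Unset Strict Implicit. Unset Printing Implicit Defensive.

Definition is_partition (n : nat) (p : seq nat) : bool :=
  [&& sorted geq p, all (fun x => 0 < x) p & sumn p == n].

Definition normalize (s : seq nat) : seq nat := sort geq (filter (fun x => 0 < x) s).

(* One elementary unit transfer: decrease part i by 1, then either increase a
   different part j (< size p) by 1, or (j = size p) create a new part 1;
   incr_nth at index size p appends the new part 1. *)
Definition transfer (p : seq nat) (i j : nat) : seq nat :=
  normalize (incr_nth (set_nth 0 p i (nth 0 p i).-1) j).

Definition adjG (n : nat) (p q : seq nat) : Prop :=
  [/\ is_partition n p, is_partition n q, q <> p &
      exists i j, [/\ i < size p, j <= size p, i <> j & q = transfer p i j]].

(* A clique of G_n (equivalently a simplex of the clique complex Cl(G_n)),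
   given as a duplicate-free list of vertices. *)
Definition is_clique (n : nat) (c : seq (seq nat)) : Prop :=
  [/\ uniq c, all (is_partition n) c &
      forall p q, p \in c -> q \in c -> p <> q -> adjG n p q].

From mathcomp Require Import all_boot zify.

(* All four partitions carry the block a^(b-3) right after their largest part,
   and a unit transfer between two parts outside this block leaves it in place.
   Adjacency therefore reduces to transfers among the few remaining parts (the
   "cores"), checked case by case.  Normalisation only matters up to
   permutation, which lets the block be moved aside and a part dropping to zero
   be discarded. *)

Set Implicit Arguments.
Unset Strict Implicit.
Unset Printing Implicit Defensive.

Definition unit_move (p : seq nat) (i j : nat) : seq nat :=
  incr_nth (set_nth 0 p i (nth 0 p i).-1) j.

Lemma geq_trans : transitive geq.
Proof. by move=> x y z; rewrite /geq /=; lia. Qed.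

Lemma normalize_perm (s t : seq nat) :
  perm_eq (filter (fun x => 0 < x) s) (filter (fun x => 0 < x) t) ->
  normalize s = normalize t.
Proof.
by move=> st; apply/(perm_sortP _ geq_trans) => // x y; rewrite /geq /=; lia.
Qed.

Lemma normalize_partition n p : is_partition n p -> normalize p = p.
Proof.
case/and3P=> sorted_p pos_p _; rewrite /normalize (all_filterP pos_p).
exact: (sorted_sort geq_trans).
Qed.

Definition transfers_to (u v : seq nat) : Prop :=
  exists i j, [/\ i < size u, j <= size u, i != j &
                   filter (fun x => 0 < x) (unit_move u i j) = v].

Section Frame.
Variables (d A : nat).

Definition frame (u : seq nat) : seq nat := take 1 u ++ nseq d A ++ drop 1 u.

Definition frame_index (k : nat) : nat := if k is k'.+1 then (d + k').+1 else 0.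

Lemma perm_frame u : perm_eq (frame u) (nseq d A ++ u).
Proof. by rewrite /frame perm_catCA cat_take_drop. Qed.

Lemma size_frame u : size (frame u) = d + size u.
Proof. by rewrite (perm_size (perm_frame u)) size_cat size_nseq. Qed.

Lemma frame_inj : injective frame.
Proof.
move=> u v uv; have /eqP: size u = size v.
  by move/(congr1 size): uv; rewrite !size_frame => /addnI.
case: u v uv => [|h t] [|h' t'] // + _; rewrite /frame /= !take0 !drop0.
by case=> -> /(congr1 (drop d)); rewrite !drop_size_cat ?size_nseq // => ->.
Qed.

Lemma nth_nseq_cat (t : seq nat) k : nth 0 (nseq d A ++ t) (d + k) = nth 0 t k.
Proof. by rewrite nth_cat size_nseq ltnNge leq_addr addKn. Qed.

Lemma set_nth_nseq_cat (t : seq nat) k y :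
  set_nth 0 (nseq d A ++ t) (d + k) y = nseq d A ++ set_nth 0 t k y.
Proof. by elim: d => //= d' ->. Qed.

Lemma incr_nth_nseq_cat (t : seq nat) k :
  incr_nth (nseq d A ++ t) (d + k) = nseq d A ++ incr_nth t k.
Proof. by elim: d => //= d' ->. Qed.

Lemma unit_move_frame u i j : 0 < size u ->
  unit_move (frame u) (frame_index i) (frame_index j) = frame (unit_move u i j).
Proof.
case: u => [|h t] // _; rewrite /frame /unit_move /= !take0 !drop0 /=.
by case: i => [|i]; case: j => [|j];
  rewrite /= ?nth_nseq_cat ?set_nth_nseq_cat ?incr_nth_nseq_cat take0 drop0.
Qed.

Lemma path_geq_nseq_cat h (t : seq nat) :
  A <= h -> path geq A t -> path geq h (nseq d A ++ t).
Proof.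
elim: d h => [|d' IH] h /= le_Ah path_t; last by rewrite le_Ah IH.
exact: (path_le geq_trans _ path_t).
Qed.

Lemma frame_partition u :
  0 < A -> A <= head 0 u -> path geq A (behead u) ->
  all (fun x => 0 < x) (behead u) -> is_partition (sumn u + A * d) (frame u).
Proof.
case: u => [|h t] /= A_gt0 le_Ah; first by rewrite leqNgt A_gt0 in le_Ah.
move=> path_t pos_t; rewrite /frame /= !take0 !drop0 /is_partition /=.
rewrite path_geq_nseq_cat // all_cat all_nseq A_gt0 orbT pos_t.
by rewrite (leq_trans A_gt0 le_Ah) sumn_cat sumn_nseq addnA addnAC eqxx.
Qed.

Lemma adjG_frame n u v :
  is_partition n (frame u) -> is_partition n (frame v) -> u != v ->
  transfers_to u v -> adjG n (frame u) (frame v).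
Proof.
move=> part_u part_v neq_uv [i [j [lt_i le_j neq_ij move_uv]]].
split=> //; first by move/frame_inj=> eq_vu; rewrite eq_vu eqxx in neq_uv.
exists (frame_index i), (frame_index j); rewrite !size_frame; split.
- by case: i lt_i {move_uv neq_ij} => /= *; lia.
- by case: j le_j {move_uv neq_ij} => /= *; lia.
- by case: i j neq_ij {move_uv lt_i le_j} => [|i] [|j] /=; lia.
rewrite -(normalize_partition part_v) /transfer -/(unit_move _ _ _).
rewrite unit_move_frame; last exact: leq_ltn_trans lt_i.
apply: normalize_perm; rewrite -move_uv.
rewrite (permPl (perm_filter _ (perm_frame _))).
by rewrite (permPr (perm_filter _ (perm_frame _))) !filter_cat filter_id.
Qed.

Lemma clique_frame n us :
  uniq us -> (forall u, u \in us -> is_partition n (frame u)) ->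
  {in us &, forall u v, u != v -> transfers_to u v} ->
  is_clique n (map frame us).
Proof.
move=> uniq_us part_us adj_us; split.
- by rewrite (map_inj_uniq frame_inj).
- by apply/allP=> _ /mapP[u u_in ->]; apply: part_us.
move=> _ _ /mapP[u u_in ->] /mapP[v v_in ->] neq_frames.
have neq_uv : u != v by apply: contraPneq neq_frames => ->.
exact: adjG_frame (part_us _ u_in) (part_us _ v_in) neq_uv (adj_us _ _ u_in v_in neq_uv).
Qed.

End Frame.

(* alpha, beta, gamma1, gamma2 are [frame (b - 3) a] of these, in this order. *)
Definition cores (a : nat) : seq (seq nat) :=
  [:: [:: a.+1; a; a - 1]; [:: a; a; a - 1; 1];
      [:: a.+1; a - 1; a - 1; 1]; [:: a.+1; a; a - 2; 1]].

Lemma uniq_cores a : 0 < a -> uniq (cores a).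
Proof. by move=> a_gt0; rewrite /= !inE !eqseq_cons ?eqxx ?andbF ?andbT; lia. Qed.

Lemma cores_partition a d u : 3 <= a -> u \in cores a ->
  is_partition (a * (d + 3)) (frame d a u).
Proof.
move=> a_ge3 u_in; have -> : a * (d + 3) = sumn u + a * d.
  by move: u_in; rewrite /cores !inE => /or4P[] /eqP-> /=; lia.
by move: u_in; rewrite /cores !inE => /or4P[] /eqP->;
  apply: frame_partition; rewrite /= ?andbT; lia.
Qed.

Lemma cores_transfers a : 3 <= a ->
  {in cores a &, forall u v, u != v -> transfers_to u v}.
Proof.
move=> a_ge3; have [c ->] : exists c, a = c.+3 by exists (a - 3); lia.
move=> u v; rewrite /cores !inE => /or4P[] /eqP-> /or4P[] /eqP->; rewrite ?eqxx // => _.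
(* The unit leaves the part indexed by the target and enters the part indexed by
   the source, the cores being indexed 3, 0, 1, 2 (for alpha, 3 is a new part). *)
- by exists 0, 3.
- by exists 1, 3.
- by exists 2, 3.
- by exists 3, 0.
- by exists 1, 0.
- by exists 2, 0.
- by exists 3, 1.
- by exists 0, 1.
- by exists 2, 1.
- by exists 3, 2.
- by exists 0, 2.
- by exists 1, 2.
Qed.

Theorem proposition3p7 (a b : nat) (ha : 3 <= a) (hb : 3 <= b) :
  let alpha  := a.+1 :: nseq (b - 2) a ++ [:: a - 1] in
  let beta   := nseq (b - 1) a ++ [:: a - 1; 1] in
  let gamma1 := a.+1 :: nseq (b - 3) a ++ [:: a - 1; a - 1; 1] in
  let gamma2 := a.+1 :: nseq (b - 2) a ++ [:: a - 2; 1] in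
  is_clique (a * b) [:: alpha; beta; gamma1; gamma2].
Proof.
have [d -> {hb}] : exists d, b = d + 3 by exists (b - 3); lia.
have -> : d + 3 - 1 = 1 + d + 1 by lia.
have -> : d + 3 - 2 = d + 1 by lia.
rewrite /= addnK !nseqD -!catA.
apply: (@clique_frame d a _ (cores a)).
- by apply: uniq_cores; lia.
- by move=> u; apply: cores_partition.
- exact: cores_transfers.
Qed.
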